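(* Let $\alpha\ge2$, $h,\ell,t\ge1$, $\varepsilon\ge0$ be integers with $h-\varepsilon\ge2\ell$, and let $\mathcal T$ be a finite family of subspaces of $\mathbb F_q^{(h-\varepsilon)t}$ with $|\mathcal T|\ge\alpha$ such that each member has dimension at most $\ell t$ and any $\alpha$ members span $\mathbb F_q^{(h-\varepsilon)t}$. Then $\alpha\ell\ge h-\varepsilon$ and $$|\mathcal T|\le\Big(\Big\lfloor\tfrac{h-\varepsilon}{\ell}\Big\rfloor-2\Big)+\Big(\alpha-\Big\lfloor\tfrac{h-\varepsilon}{\ell}\Big\rfloor+1\Big)\frac{q^{\ell t+1}-1}{q-1}.$$
   Context: ''Any $\alpha$ members'' means any $\alpha$ members with distinct indices in the family. *)

From HB Require Import structures.
From mathcomp Require Import all_boot all_order all_algebra all_field.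
Set Implicit Arguments. Unset Strict Implicit. Unset Printing Implicit Defensive.
Import Order.TTheory GRing.Theory Num.Theory.

Definition any_members_span (F : fieldType) (V : vectType F) (m alpha : nat)
  (T : 'I_m -> {vspace V}) : Prop :=
  forall S : {set 'I_m}, #|S| = alpha -> (\sum_(i in S) T i)%VS = fullv.

From HB Require Import structures.
From mathcomp Require Import all_boot all_order all_algebra all_field.
From mathcomp Require Import zify.
Import Order.TTheory GRing.Theory Num.Theory.
Set Implicit Arguments. Unset Strict Implicit. Unset Printing Implicit Defensive.
Local Open Scope ring_scope.

(* Any alpha members, each of dimension at most l t, span a space of dimension
   (h - eps) t, whence alpha l >= h - eps.  For the bound put k = (h - eps) %/ l
   and fix k - 2 members; their sum W has codimension at least l t + 1, and W
   together with any alpha - k + 2 of the remaining members is the whole space.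
   Projecting along W onto F_q^(l t + 1), the remaining members become proper
   subspaces, any alpha - k + 2 of which span.  Every proper subspace is killed
   by at least q - 1 nonzero linear forms, while a nonzero form kills at most
   alpha - k + 1 of them; double counting pairs (member, form) gives
   (m - k + 2) (q - 1) <= (alpha - k + 1) (q^(l t + 1) - 1). *)

Lemma subset_of_card (T : finType) (A : {set T}) n :
  (n <= #|A|)%N -> exists2 B : {set T}, B \subset A & #|B| = n.
Proof.
move/card_geqP=> [s [uniq_s size_s sA]]; exists [set x in s].
  by apply/subsetP=> x; rewrite inE => /sA.
by rewrite cardsE (card_uniqP uniq_s).
Qed.

Lemma dimv_sum_leq (F : fieldType) (V : vectType F) (I : finType) (S : {set I})
    (U : I -> {vspace V}) b :
  (forall i, \dim (U i) <= b)%N -> (\dim (\sum_(i in S) U i) <= #|S| * b)%N.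
Proof.
move=> dimU; rewrite -sum_nat_const; apply: leq_trans (dimv_leq_sum _ _ _) _.
exact: leq_sum.
Qed.

Section Orthogonal.
Variables (F : fieldType) (d : nat).
Implicit Types (a : 'rV[F]_d) (X : {vspace 'rV[F]_d}).

Definition orthv a : {vspace 'rV[F]_d} := lker (linfun (mulmxr a^T)).

Lemma memv_orthv a x : (x \in orthv a) = (x *m a^T == 0).
Proof. by rewrite memv_ker lfunE. Qed.

Lemma orthv_full_eq0 a : (fullv <= orthv a)%VS -> a = 0.
Proof.
move=> /subvP orth_a; apply: trmx_inj; apply/row_matrixP=> j.
by rewrite trmx0 row0 rowE; apply/eqP; rewrite -memv_orthv orth_a ?memvf.
Qed.

Lemma orthvZ k a X : (X <= orthv a)%VS -> (X <= orthv (k *: a))%VS.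
Proof.
move=> /subvP orth_a; apply/subvP=> x /orth_a.
by rewrite !memv_orthv linearZ /= -scalemxAr => /eqP->; rewrite scaler0.
Qed.

Lemma exists_orthv X : (\dim X < d)%N -> exists2 a, a != 0 & (X <= orthv a)%VS.
Proof.
move=> ltXd; pose B := \matrix_(k < \dim X) tnth (vbasis X) k.
exists (nz_row (kermx B^T)).
  rewrite nz_row_eq0 -mxrank_eq0 mxrank_ker subn_eq0 -ltnNge mxrank_tr.
  exact: leq_ltn_trans (rank_leq_row B) ltXd.
have /sub_kermxP aBT0 := nz_row_sub (kermx B^T).
rewrite -[X in (X <= _)%VS](span_basis (vbasisP X)).
apply/span_subvP=> _ /tnthP[k ->].
rewrite memv_orthv -(rowK (tnth (vbasis X)) k) -row_mul -/B.
by rewrite -[B *m _]trmxK trmx_mul trmxK aBT0 trmx0 row0.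
Qed.

End Orthogonal.

Section HyperplaneCount.
Variables (F : finFieldType) (d : nat).
Local Notation q := #|F|.

Lemma card_orthv_ge (X : {vspace 'rV[F]_d}) : (\dim X < d)%N ->
  (q - 1 <= #|[set a : 'rV[F]_d | (a != 0%R) && (X <= orthv a)%VS]|)%N.
Proof.
move=> /exists_orthv[a nz_a orth_a].
have inj_scale : injective (fun k : F => k *: a).
  move=> k k' /eqP; rewrite -subr_eq0 -scalerBl scaler_eq0 (negbTE nz_a) orbF.
  by rewrite subr_eq0 => /eqP.
rewrite subn1 -(cardsC1 0%R) -(card_imset _ inj_scale); apply: subset_leq_card.
apply/subsetP=> _ /imsetP[k nz_k ->]; rewrite !inE orthvZ // andbT.
by rewrite scaler_eq0 negb_or nz_a andbT; rewrite !inE in nz_k.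
Qed.

Lemma card_spanning_proper_subspaces (I : finType) (A : {set I})
    (X : I -> {vspace 'rV[F]_d}) c :
  (forall i, i \in A -> (\dim (X i) < d)%N) ->
  (forall S : {set I}, S \subset A -> #|S| = c.+1 -> (\sum_(i in S) X i)%VS = fullv) ->
  (#|A| * (q - 1) <= c * (q ^ d - 1))%N.
Proof.
move=> properX spanX.
have few_orth a : a != 0%R ->
    (#|[set i | (i \in A) && ((a != 0%R) && (X i <= orthv a)%VS)]| <= c)%N.
  move=> nz_a; rewrite nz_a leqNgt; apply/negP => /subset_of_card[S sS cardS].
  have sSA : S \subset A.
    by apply: subset_trans sS _; apply/subsetP=> i; rewrite inE => /andP[].
  apply/negP: nz_a; rewrite negbK; apply/eqP/orthv_full_eq0.
  rewrite -(spanX S sSA cardS); apply/subv_sumP=> i /(subsetP sS).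
  by rewrite inE => /andP[].
rewrite -sum_nat_const.
apply: (@leq_trans (\sum_(i in A) \sum_(a | (a != 0%R) && (X i <= orthv a)%VS) 1)).
  by apply: leq_sum => i /properX; rewrite sum1dep_card; apply: card_orthv_ge.
rewrite (exchange_big_dep (fun a => a != 0%R)) => [/=|i a _ /andP[]//].
apply: (@leq_trans (\sum_(a | a != 0%R) c)).
  by apply: leq_sum => a nz_a; rewrite sum1dep_card; apply: few_orth.
rewrite sum_nat_cond_const mulnC leq_mul2l; apply/orP; right.
have -> : [set a : 'rV[F]_d | a != 0] = [set~ 0] by apply/setP=> a; rewrite !inE.
by rewrite cardsC1 card_mx mul1n subn1.
Qed.

End HyperplaneCount.

Section QuotientMap.
Variables (F : fieldType) (V : vectType F) (W : {vspace V}) (d : nat).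
Hypothesis dimW_d : (\dim W + d <= \dim {:V})%N.

Let basisV := cat_tuple (vbasis W) (vbasis W^C).

Let free_basisV : free basisV.
Proof.
rewrite cat_free !(basis_free (vbasisP _)) !(span_basis (vbasisP _)) /=.
by rewrite directv_addE capv_compl eqxx !directv_trivial.
Qed.

Let d_le_codimW : (d <= \dim W^C)%N.
Proof. by rewrite dimv_compl leq_subRL // (leq_trans (leq_addr _ _) dimW_d). Qed.

Let idx (j : 'I_d) := rshift (\dim W) (widen_ord d_le_codimW j).

Definition quotient_coord (v : V) : 'rV[F]_d := \row_j coord basisV (idx j) v.

Fact quotient_coord_is_linear : linear quotient_coord.
Proof. by move=> k u v; apply/rowP=> j; rewrite !mxE linearP. Qed.
HB.instance Definition _ := GRing.isSemilinear.Build F V 'rV[F]_d _ quotient_coord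
  (GRing.semilinear_linear quotient_coord_is_linear).

Lemma exists_quotient_map :
  exists L : 'Hom(V, 'rV[F]_d), (W <= lker L)%VS /\ limg L = fullv.
Proof.
exists (linfun quotient_coord); split.
  rewrite -[W in (W <= _)%VS](span_basis (vbasisP W)).
  apply/span_subvP=> _ /tnthP[k ->]; rewrite memv_ker lfunE /=; apply/eqP/rowP=> j.
  have -> : tnth (vbasis W) k = basisV`_(lshift (\dim W^C) k).
    by rewrite /= nth_cat size_tuple /= ltn_ord (tnth_nth 0).
  by rewrite !mxE coord_free // eq_lrshift.
apply/eqP; rewrite eqEsubv subvf /=; apply/subvP=> r _.
rewrite (row_sum_delta r); apply: memv_suml => j _; apply: memvZ.
have -> : delta_mx 0 j = linfun quotient_coord basisV`_(idx j).
  apply/rowP=> j'; rewrite lfunE !mxE coord_free // eqxx /= eq_rshift.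
  by rewrite -val_eqE /= val_eqE eq_sym.
exact: memv_img (memvf _).
Qed.

End QuotientMap.

Lemma card_spanning_family_over (F : finFieldType) (V : vectType F) (I : finType)
    (W : {vspace V}) (A : {set I}) (U : I -> {vspace V}) c d :
  (\dim W + d <= \dim {:V})%N ->
  (forall i, i \in A -> (\dim (U i) < d)%N) ->
  (forall S : {set I}, S \subset A -> #|S| = c.+1 ->
     (W + \sum_(i in S) U i)%VS = fullv) ->
  (#|A| * (#|F| - 1) <= c * (#|F| ^ d - 1))%N.
Proof.
move=> dimW_d smallU spanU; have [L [kerL imL]] := exists_quotient_map dimW_d.
apply: (@card_spanning_proper_subspaces _ _ _ _ (fun i => L @: U i)%VS).
  move=> i /smallU; apply: leq_ltn_trans.
  by rewrite -[leqRHS](limg_ker_dim L) leq_addl.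
move=> S sSA cardS; rewrite -limg_sum -imL -(spanU S sSA cardS) limgD.
by move: kerL; rewrite lkerE => /eqP->; rewrite add0v.
Qed.

Lemma ler_nat_quotient_bound (R : numFieldType) (m b c p q : nat) :
  (b <= m)%N -> (1 < q)%N -> (0 < p)%N ->
  ((m - b) * (q - 1) <= c * (p - 1))%N ->
  m%:R <= b%:R + c%:R * ((p%:R - 1) / (q%:R - 1)) :> R.
Proof.
move=> le_bm gt1_q gt0_p le_count.
have natrB1 n : (0 < n)%N -> n%:R - 1 = (n - 1)%:R :> R by move=> ?; rewrite natrB.
rewrite -(subnKC le_bm) natrD lerD2l !natrB1 ?(ltnW gt1_q) // mulrA.
by rewrite ler_pdivlMr ?ltr0n ?subn_gt0 // -!natrM ler_nat.
Qed.

Section AnyMembersSpan.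
Variables (F : fieldType) (V : vectType F) (m alpha : nat) (T : 'I_m -> {vspace V}).
Hypothesis spanT : any_members_span alpha T.

Lemma any_members_span_dim b : (alpha <= m)%N ->
  (forall i, (\dim (T i) <= b)%N) -> (\dim {:V} <= alpha * b)%N.
Proof.
move=> le_alpha_m dimT.
have [S _ cardS] : exists2 S : {set 'I_m}, S \subset setT & #|S| = alpha.
  by apply: subset_of_card; rewrite cardsT card_ord.
by rewrite -(spanT cardS) -cardS; apply: dimv_sum_leq.
Qed.

Lemma any_members_span_over (B S : {set 'I_m}) :
  S \subset ~: B -> (#|B| + #|S|)%N = alpha ->
  ((\sum_(i in B) T i) + \sum_(i in S) T i)%VS = fullv.
Proof.
move=> sSB cardBS; rewrite -big_setU; last exact: addvv.
apply: spanT; rewrite cardsU -cardBS.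
move: sSB; rewrite -disjoints_subset disjoint_sym -setI_eq0 => /eqP->.
by rewrite cards0 subn0.
Qed.

End AnyMembersSpan.

Theorem mainTheorem11 (F : finFieldType) (alpha h l t eps m : nat)
  (T : 'I_m -> {vspace 'rV[F]_((h - eps) * t)}) :
  (2 <= alpha)%N -> (1 <= h)%N -> (1 <= l)%N -> (1 <= t)%N ->
  (2 * l <= h - eps)%N ->
  (alpha <= m)%N ->
  (forall i, (\dim (T i) <= l * t)%N) ->
  any_members_span alpha T ->
  (h - eps <= alpha * l)%N /\
  (m%:Q <= (((h - eps) %/ l)%N%:Q - 2%:Q)
           + (alpha%:Q - ((h - eps) %/ l)%N%:Q + 1)
             * (((#|F| ^ (l * t + 1))%N%:Q - 1) / (#|F|%:Q - 1)))%R.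
Proof.
move: T; set n := (h - eps)%N => T _ _ l_gt0 t_gt0 le_2l_n le_alpha_m dimT spanT.
have dimV : \dim {:'rV[F]_(n * t)} = (n * t)%N by rewrite dimvf dim_matrix mul1r.
have le_n_alpha_l : (n <= alpha * l)%N.
  by rewrite -(leq_pmul2r t_gt0) -mulnA -dimV (any_members_span_dim spanT).
split=> //; set k := (n %/ l)%N.
have le_2_k : (2 <= k)%N by rewrite leq_divRL.
have le_kl_n : (k * l <= n)%N by apply: leq_divM.
have le_k_alpha : (k <= alpha)%N by rewrite -(leq_pmul2r l_gt0) (leq_trans le_kl_n).
have [B _ cardB] : exists2 B : {set 'I_m}, B \subset setT & #|B| = (k - 2)%N.
  by apply: subset_of_card; rewrite cardsT card_ord; lia.
have cardCB : #|~: B| = (m - (k - 2))%N by rewrite cardsCs setCK card_ord cardB.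
have natQ (j : nat) : j%:Q = j%:R by rewrite pmulrn.
rewrite !natQ -natrB // -[alpha%:R - _]natrB // natr1.
have q_gt1 := card_finNzRing_gt1 F.
apply: ler_nat_quotient_bound => //; first lia.
  by rewrite expn_gt0 ltnW.
rewrite -cardCB.
apply: (card_spanning_family_over (W := \sum_(i in B) T i)%VS) => [|i _|S sSB cardS].
- have := dimv_sum_leq B dimT; rewrite cardB dimV.
  have : (k * l * t <= n * t)%N by rewrite leq_pmul2r.
  have : (0 < l * t)%N by rewrite muln_gt0 l_gt0.
  move: le_2_k (\dim _); clear; nia.
- by rewrite addn1 ltnS.
- by apply: (any_members_span_over spanT sSB); rewrite cardB cardS; lia.
Qed.
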